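(* Let $K\ge 1$ and, for $k=1,\dots,K$, let $a_k>0$, $b_k>0$, $P_{L,k}>0$, and $\bar{\gamma}>0$. Let $Z_1,\dots,Z_K$ be independent, with $Z_k$ gamma distributed with shape $a_k$ and scale $b_k$ (the moment-matched gamma approximation described in the context), and set $\gamma_k=\frac{\bar{\gamma}}{P_{L,k}}Z_k^2$ and $\gamma^*=\max_{1\le k\le K}\gamma_k$. Then for $\gamma\ge 0$ the CDF of $\gamma^*$ is $$F_{\gamma^*}(\gamma)=\sum_{n_1=0}^{\infty}\cdots\sum_{n_K=0}^{\infty}\prod_{k=1}^{K}\frac{(-1)^{n_k}\left(\sqrt{\frac{P_{L,k}}{\bar{\gamma}b_k^2}}\right)^{a_k+n_k}}{n_k!\,(a_k+n_k)\,\Gamma(a_k)}\;\gamma^{\frac{\sum_{k=1}^{K}(a_k+n_k)}{2}},$$ and for $\gamma>0$ the PDF of $\gamma^*$ is $$f_{\gamma^*}(\gamma)=\sum_{j=1}^{K}\frac{\left(\frac{P_{L,j}}{\bar{\gamma}}\gamma\right)^{\frac{a_j-1}{2}}\exp\left(-\sqrt{\frac{P_{L,j}}{\bar{\gamma}b_j^2}\gamma}\right)}{2b_j^{a_j}\Gamma(a_j)\sqrt{\frac{\bar{\gamma}}{P_{L,j}}\gamma}}\;\sum_{(n_k)_{k\ne j}\in\mathbb{Z}_{\ge0}^{K-1}}\;\prod_{k\ne j}\frac{(-1)^{n_k}\left(\sqrt{\frac{P_{L,k}}{\bar{\gamma}b_k^2}}\right)^{a_k+n_k}}{n_k!\,(a_k+n_k)\,\Gamma(a_k)}\;\gamma^{\frac{\sum_{k\ne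 j}(a_k+n_k)}{2}}.$$
   Context: Model: there are $K$ reflecting surfaces; surface $k$ has $N_k$ elements with mutually independent amplitudes $\alpha_k^{(i)}$ (Nakagami-$m$, shape $m_{k,1}$, spread $\Omega_{k,1}$) and $\beta_k^{(i)}$ (Nakagami-$m$, shape $m_{k,2}$, spread $\Omega_{k,2}$), and $a_k=N_k\mu_k^2/\sigma_k^2$, $b_k=\sigma_k^2/\mu_k$, where $\mu_k$ and $\sigma_k^2$ are the mean and variance of $\alpha_k^{(1)}\beta_k^{(1)}$; the distribution of $\sum_{i=1}^{N_k}\alpha_k^{(i)}\beta_k^{(i)}$ is approximated by the gamma law with shape $a_k$, scale $b_k$ (density $z^{a_k-1}e^{-z/b_k}/(\Gamma(a_k)b_k^{a_k})$). $P_{L,k}$ is the path loss of path $k$, $\bar{\gamma}$ the average SNR, and $\gamma^*$ the SNR of the selected (best) surface. *)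

From HB Require Import structures.
From mathcomp Require Import all_boot all_order all_algebra.
From mathcomp Require Import all_classical all_reals all_analysis.
Set Implicit Arguments. Unset Strict Implicit. Unset Printing Implicit Defensive.
Import Order.TTheory GRing.Theory Num.Theory.
Import numFieldNormedType.Exports.
Local Open Scope classical_set_scope.
Local Open Scope ring_scope.

Definition Gamma {R : realType} (a : R) : R :=
  Rintegral lebesgue_measure `]0%R, +oo[%classic
    (fun x => powR x (a - 1) * expR (- x)).

Definition gamma_pdf {R : realType} (a b : R) (x : R) : R :=
  powR x (a - 1) * expR (- (x / b)) / (Gamma a * powR b a).

Definition gamma_distributed {d : measure_display} {T : measurableType d}
  {R : realType} (P : probability T R) (Z : {RV P >-> R}) (a b : R) : Prop :=
  forall A : set R, measurable A ->
    P (Z @^-1` A) =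
    (\int[lebesgue_measure]_(x in A `&` `]0%R, +oo[%classic) (gamma_pdf a b x)%:E)%E.

Definition mutually_independent {d : measure_display} {T : measurableType d}
  {R : realType} (P : probability T R) (K : nat) (Z : 'I_K -> {RV P >-> R}) : Prop :=
  forall A : 'I_K -> set R, (forall k, measurable (A k)) ->
    P [set t | forall k, A k (Z k t)] = (\prod_(k < K) P (Z k @^-1` A k))%E.

(* Iterated (multiple) series: the summation indices are the elements of the
   list s (summed in that order, each ranging over nat); the summand F takes
   the assignment of indices as a function I -> nat.  [is_msum s F l] says
   that every inner series converges and the iterated sum equals l. *)
Fixpoint is_msum {R : realType} {I : eqType} (s : seq I)
    (F : (I -> nat) -> R) (l : R) : Prop :=
  match s with
  | [::] => F (fun _ => 0%N) = l
  | i :: s' => exists g : nat -> R,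
      (forall n : nat, is_msum s' (fun ns => F (fun k => if k == i then n else ns k)) (g n))
      /\ series g @ \oo --> l
  end.

Definition coef {R : realType} (a b PL gbar : R) (n : nat) : R :=
  (-1) ^+ n * powR (Num.sqrt (PL / (gbar * b ^+ 2))) (a + n%:R)
  / (n`!%:R * (a + n%:R) * Gamma a).

From HB Require Import structures.
From mathcomp Require Import all_boot all_order all_algebra.
From mathcomp Require Import all_classical all_reals all_analysis.
From mathcomp Require Import ring measurable_realfun.
Import Order.TTheory GRing.Theory Num.Theory.
Import numFieldNormedType.Exports.

Set Implicit Arguments.
Unset Strict Implicit.
Unset Printing Implicit Defensive.
Local Open Scope classical_set_scope.
Local Open Scope ring_scope.

(* gamma* <= g iff |Z_k| <= sqrt (P_{L,k} g / gbar) for every k, so by independence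
   the CDF of gamma* is a product of gamma CDFs.  The gamma CDF at z is
   gamma(a, z/b) / Gamma(a), where gamma(a, y) = y^a S(y) for an entire power
   series S; the identity a S + y S' = e^(-y) makes it an antiderivative of the
   gamma density.  Expanding S at y = sqrt (P_{L,k} g / gbar) / b_k gives one series
   per factor, and the PDF follows by the product rule and the chain rule through
   the square root. *)

Lemma powR_sum {R : realType} {I : Type} (x : R) (r : seq I) (P : pred I) (f : I -> R) :
  (forall i, P i -> 0 < f i) ->
  powR x (\sum_(i <- r | P i) f i) = \prod_(i <- r | P i) powR x (f i).
Proof.
move=> f_gt0; elim: r => [|i r IH]; first by rewrite !big_nil powRr0.
rewrite !big_cons; case: ifP => // Pi; rewrite powRD ?IH //.
by rewrite gt_eqF // ltr_pwDl ?f_gt0 // sumr_ge0 // => j /f_gt0/ltW.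
Qed.

Lemma mul_sqr_leE {R : rcfType} (c w x : R) : 0 < c -> 0 <= x ->
  (c * w ^+ 2 <= x) = (- Num.sqrt (c^-1 * x) <= w <= Num.sqrt (c^-1 * x)).
Proof.
move=> c_gt0 x_ge0.
rewrite -ler_norml -sqrtr_sqr ler_sqrt; last by rewrite mulr_ge0 // invr_ge0 ltW.
by rewrite -[in RHS](ler_pM2l c_gt0) mulVKf ?gt_eqF.
Qed.

Lemma sqrtr_div_sqr {R : rcfType} (x b : R) : 0 <= x -> 0 < b ->
  Num.sqrt (x / b ^+ 2) = Num.sqrt x / b.
Proof.
by move=> x_ge0 b_gt0; rewrite -exprVn sqrtrM // sqrtr_sqr ger0_norm // invr_ge0 ltW.
Qed.

Section PowerSeries.
Variable R : realType.

Lemma is_cvg_pseries_fact_bound (c : R^nat) (M : R) :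
  (forall n, `|c n| <= M / n`!%:R) -> forall x, cvgn (pseries c x).
Proof.
move=> hc x; apply: normed_cvg.
have M0 : 0 <= M by have := hc 0%N; rewrite fact0 divr1; apply: le_trans.
apply: (@series_le_cvg _ _ (M *: exp_coeff `|x|)).
- by move=> n; rewrite /= normr_ge0.
- by move=> n; rewrite /= mulr_ge0 // exp_coeff_ge0.
- move=> n /=; rewrite /exp_coeff /= normrM normrX.
  rewrite [X in _ <= X](_ : _ = M / n`!%:R * `|x| ^+ n); last first.
    by rewrite -[LHS]/(M * (`|x| ^+ n / n`!%:R)) mulrA mulrAC.
  by rewrite ler_wpM2r // exprn_ge0.
- exact: is_cvg_seriesZ (is_cvg_series_exp_coeff _).
Qed.

Lemma pseries_diffs_fact_bound (c : R^nat) (M : R) :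
  (forall n, `|c n| <= M / n`!%:R) -> forall n, `|pseries_diffs c n| <= M / n`!%:R.
Proof.
move=> hc n; rewrite /pseries_diffs normrM normr_nat.
rewrite (le_trans (ler_wpM2l _ (hc n.+1))) //.
by rewrite factS natrM invfM mulrCA (mulrA n.+1%:R) mulfV ?mul1r.
Qed.

Lemma is_derive_pseries_fact_bound (c : R^nat) (M : R) (x : R) :
  (forall n, `|c n| <= M / n`!%:R) ->
  is_derive x 1 (fun y => limn (pseries c y)) (limn (pseries (pseries_diffs c) x)).
Proof.
move=> hc; have hc' := pseries_diffs_fact_bound hc.
apply: (@pseries_snd_diffs _ _ (`|x| + 1)).
- exact: is_cvg_pseries_fact_bound hc _.
- exact: is_cvg_pseries_fact_bound hc' _.
- exact: is_cvg_pseries_fact_bound (pseries_diffs_fact_bound hc') _.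
- by rewrite [X in _ < X]ger0_norm ?ltrDl // addr_ge0.
Qed.

End PowerSeries.

Lemma is_msum_prod {R : realType} {I : eqType} (s : seq I) (u : I -> nat -> R)
    (S : I -> R) (G : (I -> nat) -> R) :
  uniq s -> (forall i, i \in s -> series (u i) @ \oo --> S i) ->
  (forall ns, G ns = \prod_(i <- s) u i (ns i)) ->
  is_msum s G (\prod_(i <- s) S i).
Proof.
move=> s_uniq u_cvg G_E.
(* The constant c carries the factors of the outer, already fixed, indices. *)
suff msumZ c G' : (forall ns, G' ns = c * \prod_(i <- s) u i (ns i)) ->
    is_msum s G' (c * \prod_(i <- s) S i).
  by rewrite -[X in is_msum _ _ X]mul1r; apply: msumZ => ns; rewrite mul1r.
elim: s s_uniq u_cvg c G' {G G_E} => [_ _ c G G_E|i s IH /= /andP[i_notin_s s_uniq]].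
  by rewrite /= G_E !big_nil.
move=> u_cvg c G G_E.
set Ss := \prod_(k <- s) S k.
exists (fun n => c * u i n * Ss); split.
  move=> n; apply: IH => // [k ks|ns]; first by apply: u_cvg; rewrite inE ks orbT.
  rewrite G_E big_cons eqxx -mulrA; congr (_ * (_ * _)).
  rewrite big_seq [RHS]big_seq; apply: eq_bigr => k ks.
  by case: eqP => // ki; move: i_notin_s; rewrite -ki ks.
have -> : series (fun n => c * u i n * Ss) = fun N => series (u i) N * (c * Ss).
  by apply/funext => N; rewrite /series /= mulr_suml; apply: eq_bigr => n _; ring.
by rewrite big_cons -/Ss mulrCA; apply: cvgMr_tmp; apply: u_cvg; rewrite mem_head.
Qed.

Lemma is_derive_prod {R : realType} {I : eqType} (s : seq I) (h : I -> R -> R)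
    (dh : I -> R) (x : R) :
  uniq s -> (forall i, i \in s -> is_derive x 1 (h i) (dh i)) ->
  is_derive x 1 (fun y => \prod_(i <- s) h i y)
    (\sum_(j <- s) dh j * \prod_(k <- s | k != j) h k x).
Proof.
elim: s => [_ _|i s IH /= /andP[i_notin_s s_uniq] h_der].
  under eq_fun do rewrite big_nil.
  by rewrite big_nil; exact: is_derive_cst.
have -> : (fun y => \prod_(k <- i :: s) h k y) = h i * (fun y => \prod_(k <- s) h k y).
  by apply/funext => y; rewrite big_cons.
have := is_deriveM (h_der i (mem_head _ _))
  (IH s_uniq (fun k ks => h_der k (@mem_behead _ (i :: s) k ks))).
move/is_derive_eq; apply.
rewrite big_cons big_cons eqxx /= /GRing.scale /=.
have -> : \prod_(k <- s | k != i) h k x = \prod_(k <- s) h k x.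
  rewrite big_seq_cond [RHS]big_seq; apply: eq_bigl => k.
  by apply: andb_idr => ks; apply: contraNneq i_notin_s => <-.
rewrite mulr_sumr addrC; congr (_ + _); first by rewrite mulrC.
rewrite [LHS]big_seq [RHS]big_seq; apply: eq_bigr => j js.
rewrite big_cons; case: eqP => [ij|_]; first by move: i_notin_s; rewrite ij js.
by rewrite mulrCA.
Qed.

(* gamma(a, y) = \int_0^y t^(a-1) e^(-t) dt = y^a \sum_n (-1)^n y^n / (n! (a + n)). *)
Definition igamma_coef {R : realType} (a : R) (n : nat) : R :=
  (-1) ^+ n / (n`!%:R * (a + n%:R)).

Definition igamma_series {R : realType} (a y : R) : R :=
  limn (pseries (igamma_coef a) y).

Definition lower_igamma {R : realType} (a y : R) : R := powR y a * igamma_series a y.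

Definition gamma_cdf {R : realType} (a b z : R) : R := lower_igamma a (z / b) / Gamma a.

Section LowerIncompleteGamma.
Variables (R : realType) (a : R).
Hypothesis a_gt0 : 0 < a.

Lemma igamma_coef_bound n : `|igamma_coef a n| <= a^-1 / n`!%:R.
Proof.
rewrite /igamma_coef normrM normrX normrN normr1 expr1n mul1r.
rewrite normfV normrM normr_nat ger0_norm; last by rewrite addr_ge0 // ltW.
rewrite invfM mulrC ler_wpM2r // ?invr_ge0 //.
by rewrite lef_pV2 ?posrE ?ltr_wpDr // lerDl.
Qed.

Lemma is_derive_igamma_series (y : R) :
  is_derive y 1 (igamma_series a) (limn (pseries (pseries_diffs (igamma_coef a)) y)).
Proof. exact: is_derive_pseries_fact_bound igamma_coef_bound. Qed.

Lemma mul_igamma_coef m : (a + m%:R) * igamma_coef a m = (-1) ^+ m / m`!%:R.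
Proof.
rewrite /igamma_coef; field.
by rewrite pnatr_eq0 -lt0n fact_gt0 /= gt_eqF // ltr_wpDr.
Qed.

(* Termwise, a c_n + n c_n = (-1)^n / n!, the coefficients of exp(-y). *)
Lemma igamma_series_ode (y : R) :
  a * igamma_series a y + y * limn (pseries (pseries_diffs (igamma_coef a)) y) =
  expR (- y).
Proof.
have bound := igamma_coef_bound.
have partial_sums N : series (exp_coeff (- y)) N.+1 =
    a * pseries (igamma_coef a) y N.+1 +
    y * pseries (pseries_diffs (igamma_coef a)) y N.
  rewrite /pseries /series /= !mulr_sumr.
  rewrite big_nat_recl // [X in _ = X + _]big_nat_recl // -addrA -big_split /=.
  congr (_ + _).
    by rewrite /exp_coeff /igamma_coef /= !expr0 fact0 addr0 mulr1; field; rewrite gt_eqF.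
  apply: eq_bigr => i _; rewrite /exp_coeff /pseries_diffs /=.
  transitivity ((a + i.+1%:R) * igamma_coef a i.+1 * y ^+ i.+1).
    by rewrite mul_igamma_coef [(- y) ^+ _]exprNn mulrAC.
  rewrite exprS; ring.
suff exp_cvg : series (exp_coeff (- y)) @ \oo -->
    a * igamma_series a y + y * limn (pseries (pseries_diffs (igamma_coef a)) y).
  by rewrite /expR (cvg_lim _ exp_cvg).
rewrite -cvg_shiftS /=; under eq_fun do rewrite partial_sums.
apply: cvgD; apply: cvgMl_tmp; rewrite ?cvg_shiftS.
- exact: is_cvg_pseries_fact_bound bound y.
- exact: is_cvg_pseries_fact_bound (pseries_diffs_fact_bound bound) y.
Qed.

Lemma is_derive_lower_igamma (y : R) : 0 < y ->
  is_derive y 1 (lower_igamma a) (powR y (a - 1) * expR (- y)).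
Proof.
move=> y_gt0.
have := is_deriveM (is_derive1_powR a y_gt0) (is_derive_igamma_series y).
move/is_derive_eq; apply.
rewrite -(igamma_series_ode y) -(mulr_powRB1 (ltW y_gt0) a_gt0) /GRing.scale /=.
ring.
Qed.

Lemma lower_igamma0 : lower_igamma a 0 = 0.
Proof. by rewrite /lower_igamma powR0 ?gt_eqF // mul0r. Qed.

Lemma lower_igamma_cvg0 : lower_igamma a y @[y --> 0^'+] --> 0.
Proof.
have S0 : igamma_series a y @[y --> 0^'+] --> igamma_series a 0.
  apply/cvg_at_right_filter/differentiable_continuous/derivable1_diffP.
  by case: (is_derive_igamma_series 0).
rewrite /lower_igamma -[X in _ --> X](mul0r (igamma_series a 0)).
exact: cvgM (powR_cvg0 a_gt0) S0.
Qed.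

End LowerIncompleteGamma.

Section GammaLaw.
Variables (R : realType) (a b : R).

Lemma Gamma_ge0 : 0 <= Gamma a.
Proof.
rewrite /Gamma /Rintegral fine_ge0 // integral_ge0 // => x _.
by rewrite lee_fin mulr_ge0 ?powR_ge0 ?expR_ge0.
Qed.

Lemma gamma_pdf_ge0 (x : R) : 0 <= gamma_pdf a b x.
Proof. by rewrite divr_ge0 ?mulr_ge0 ?powR_ge0 ?expR_ge0 ?Gamma_ge0. Qed.

Lemma measurable_gamma_pdf : measurable_fun [set: R] (gamma_pdf a b).
Proof.
have -> : gamma_pdf a b = (fun x => ((fun x => powR x (a - 1)) \*
    (expR \o (fun x => x * - b^-1))) x * (Gamma a * powR b a)^-1).
  by apply/funext => x; rewrite /gamma_pdf /= mulrN.
apply: measurable_funM => //; apply: measurable_funM; first exact: measurable_powR.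
by apply: measurableT_comp => //; exact: measurable_funM.
Qed.

Lemma derivable_gamma_pdf (x : R) : 0 < x -> derivable (gamma_pdf a b) x 1.
Proof.
move=> x_gt0.
have dpow := is_derive1_powR (a - 1) x_gt0.
have dexp := is_derive1_comp (is_derive_expR _) (is_deriveZ (- b^-1) (is_derive_id x 1)).
have -> : gamma_pdf a b =
    (Gamma a * powR b a)^-1 \*: ((fun y => powR y (a - 1)) * (expR \o - b^-1 \*: id)).
  apply/funext => y.
  by rewrite /gamma_pdf !fctE /= /GRing.scale /= mulNr mulrC [y / b]mulrC.
by case: (is_deriveZ (Gamma a * powR b a)^-1 (is_deriveM dpow dexp)).
Qed.

Hypotheses (a_gt0 : 0 < a) (b_gt0 : 0 < b).

Lemma is_derive_gamma_cdf (z : R) : 0 < z ->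
  is_derive z 1 (gamma_cdf a b) (gamma_pdf a b z).
Proof.
move=> z_gt0.
have zb_gt0 : 0 < b^-1 *: z by rewrite /GRing.scale /= mulr_gt0 ?invr_gt0.
have := is_deriveZ (Gamma a)^-1 (is_derive1_comp
  (is_derive_lower_igamma a_gt0 zb_gt0) (is_deriveZ b^-1 (is_derive_id z 1))).
have -> : (Gamma a)^-1 \*: (lower_igamma a \o b^-1 \*: id) = gamma_cdf a b.
  by apply/funext => y; rewrite /gamma_cdf /= /GRing.scale /= mulrC [y * _]mulrC.
move/is_derive_eq; apply.
have pow_z : powR z (a - 1) = powR (z / b) (a - 1) * powR b (a - 1).
  by rewrite -powRM ?divfK ?gt_eqF // ltW // divr_gt0.
rewrite /gamma_pdf pow_z -(mulr_powRB1 (ltW b_gt0) a_gt0) /GRing.scale /= mulr1.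
rewrite [b^-1 * z]mulrC !invfM; move: (Gamma a)^-1 => G.
by field; rewrite !gt_eqF ?powR_gt0.
Qed.

Lemma gamma_cdf0 : gamma_cdf a b 0 = 0.
Proof. by rewrite /gamma_cdf mul0r lower_igamma0 // mul0r. Qed.

Lemma gamma_cdf_cvg0 : gamma_cdf a b z @[z --> 0^'+] --> 0.
Proof.
apply/cvg_at_rightP => u [u_gt0 u_cvg].
rewrite -(mul0r (Gamma a)^-1); apply: cvgMr_tmp.
apply: (cvg_at_rightP _ _ _).1 (lower_igamma_cvg0 a_gt0) _ _; split.
  by move=> n; rewrite divr_gt0.
by rewrite -(mul0r b^-1); apply: cvgMr_tmp.
Qed.

Lemma integral_gamma_pdf_itvcc (e s : R) : 0 < e -> e < s ->
  (\int[lebesgue_measure]_(x in `[e, s]) (gamma_pdf a b x)%:E =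
   (gamma_cdf a b s - gamma_cdf a b e)%:E)%E.
Proof.
move=> e_gt0 e_lt_s.
have der x : e <= x -> is_derive x 1 (gamma_cdf a b) (gamma_pdf a b x).
  by move=> ex; apply: is_derive_gamma_cdf; exact: lt_le_trans ex.
have cont x : e <= x -> {for x, continuous (gamma_cdf a b)}.
  move=> /der [+ _] => /derivable1_diffP.
  exact: differentiable_continuous.
rewrite EFinB; apply: continuous_FTC2 => //.
- apply: derivable_within_continuous => x; rewrite in_itv /= => /andP[ex _].
  exact: derivable_gamma_pdf (lt_le_trans e_gt0 ex).
- split.
  + by move=> x; rewrite in_itv /= => /andP[/ltW /der [] ].
  + exact/cvg_at_right_filter/cont.
  + exact/cvg_at_left_filter/cont/ltW.
- move=> x; rewrite in_itv /= => /andP[/ltW ex _].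
  by rewrite derive1E; apply: derive_val; exact: der.
Qed.

Lemma integral_gamma_pdf (s : R) : 0 <= s ->
  (\int[lebesgue_measure]_(x in `]0%R, s]) (gamma_pdf a b x)%:E =
   (gamma_cdf a b s)%:E)%E.
Proof.
rewrite le_eqVlt => /predU1P[<-|s_gt0].
  by rewrite set_itv_ge ?bnd_simp // integral_set0 gamma_cdf0.
(* The density is unbounded at 0 when a < 1: apply the FTC on [1/(n+1), s] and
   pass to the limit by monotone convergence. *)
pose E n := `[n.+1%:R^-1, s]%classic.
have E_nd : {homo E : m n / (m <= n)%N >-> (m <= n)%O}.
  move=> m n mn; rewrite subsetEset => x; rewrite /E /= !in_itv /= => /andP[mx ->].
  by rewrite andbT (le_trans _ mx) // lef_pV2 ?posrE // ler_nat.
have E_cup : \bigcup_n E n = `]0, s]%classic.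
  by rewrite itv_open_bnd_bigcup; apply: eq_bigcupr => n _; rewrite add0r.
have mpdf n : measurable_fun (E n) (fun x => (gamma_pdf a b x)%:E).
  by apply/measurable_EFinP/measurable_funTS; exact: measurable_gamma_pdf.
have pdf_ge0 n x : E n x -> (0 <= (gamma_pdf a b x)%:E)%E.
  by rewrite lee_fin gamma_pdf_ge0.
have := ge0_nondecreasing_set_cvg_integral (mu := lebesgue_measure) E_nd
  (fun n => measurable_itv _) mpdf pdf_ge0.
rewrite E_cup => int_cvg; apply: (cvg_unique _ int_cvg) => //=.
apply: (@cvg_trans _ ((fun n => (gamma_cdf a b s - gamma_cdf a b n.+1%:R^-1)%:E) @ \oo)).
  apply: near_eq_cvg; near=> n.
  rewrite /E integral_gamma_pdf_itvcc ?invr_gt0 ?ltr0n //.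
  near: n; exact: (cvgr_lt _ cvg_harmonic).
apply: cvg_EFin; first exact: nearW.
rewrite -[X in _ --> X]subr0; apply: cvgB; first exact: cvg_cst.
apply: (cvg_at_rightP _ _ _).1 gamma_cdf_cvg0 _ (conj _ cvg_harmonic) => n.
exact: harmonic_gt0.
Unshelve. all: by end_near.
Qed.

Lemma gamma_distributed_itv d (T : measurableType d) (P : probability T R)
    (X : {RV P >-> R}) (s : R) :
  gamma_distributed X a b -> 0 <= s -> P (X @^-1` `[- s, s]) = (gamma_cdf a b s)%:E.
Proof.
move=> X_gamma s_ge0; rewrite X_gamma ?measurable_itv // -integral_gamma_pdf //.
congr integral; apply/seteqP; split => x /=; rewrite !in_itv /=.
  by move=> [/andP[_ ->] /andP[-> _]].
move=> /andP[x_gt0 ->]; rewrite x_gt0 andbT; split => //.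
by rewrite (le_trans _ (ltW x_gt0)) // oppr_le0.
Qed.

End GammaLaw.

Section GammaCDFOfSqrt.
Variables (R : realType) (a b PL gbar : R).
Hypotheses (a_gt0 : 0 < a) (b_gt0 : 0 < b) (PL_gt0 : 0 < PL) (gbar_gt0 : 0 < gbar).

Lemma cvg_series_coef (g : R) : 0 <= g ->
  series (fun n => coef a b PL gbar n * powR g ((a + n%:R) / 2)) @ \oo -->
  gamma_cdf a b (Num.sqrt (PL / gbar * g)).
Proof.
move=> g_ge0.
have cg_ge0 : 0 <= PL / gbar * g by rewrite mulr_ge0 // divr_ge0 // ltW.
pose y := Num.sqrt (PL / gbar * g) / b.
have y_ge0 : 0 <= y by rewrite divr_ge0 ?sqrtr_ge0 ?ltW.
have root_y : Num.sqrt (PL / (gbar * b ^+ 2)) * Num.sqrt g = y.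
  rewrite -sqrtrM; last by rewrite divr_ge0 ?mulr_ge0 ?sqr_ge0 // ltW.
  by rewrite /y -sqrtr_div_sqr // invfM; congr Num.sqrt; ring.
have termE n : coef a b PL gbar n * powR g ((a + n%:R) / 2) =
    powR y a / Gamma a * (igamma_coef a n * y ^+ n).
  have -> : powR g ((a + n%:R) / 2) = powR (Num.sqrt g) (a + n%:R).
    by rewrite -powR12_sqrt // -powRrM mulrC.
  rewrite /coef /igamma_coef mulrAC -[_ * _ * Num.sqrt g `^ _]mulrA.
  rewrite -powRM ?sqrtr_ge0 // root_y powRD; last by rewrite gt_eqF ?implyFb // ltr_wpDr.
  rewrite powR_mulrn // !invfM; ring.
rewrite (_ : series _ = fun N => powR y a / Gamma a * pseries (igamma_coef a) y N).
  rewrite /gamma_cdf /lower_igamma -/y mulrAC; apply: cvgMl_tmp.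
  exact: is_cvg_pseries_fact_bound (igamma_coef_bound a_gt0) y.
apply/funext => N; rewrite /series /pseries /= mulr_sumr.
by apply: eq_bigr => n _; rewrite termE.
Qed.

Lemma is_derive_gamma_cdf_sqrt (g : R) : 0 < g ->
  is_derive g 1 (fun x => gamma_cdf a b (Num.sqrt (PL / gbar * x)))
    (powR (PL / gbar * g) ((a - 1) / 2) * expR (- Num.sqrt (PL / (gbar * b ^+ 2) * g))
     / (2 * powR b a * Gamma a * Num.sqrt (gbar / PL * g))).
Proof.
move=> g_gt0.
have c_gt0 : 0 < PL / gbar by rewrite divr_gt0.
have cg_gt0 : 0 < PL / gbar *: g by rewrite mulr_gt0.
have s_gt0 : 0 < Num.sqrt (PL / gbar *: g) by rewrite sqrtr_gt0.
have := is_derive1_comp (g := Num.sqrt \o *:%R (PL / gbar))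
  (is_derive_gamma_cdf a_gt0 b_gt0 s_gt0)
  (is_derive1_comp (is_derive1_sqrt cg_gt0) (is_deriveZ (PL / gbar) (is_derive_id g 1))).
move/is_derive_eq; apply; rewrite /GRing.scale /= mulr1.
have cg_ge0 : 0 <= PL / gbar * g by exact: ltW.
have pdf_pow : powR (Num.sqrt (PL / gbar * g)) (a - 1) = powR (PL / gbar * g) ((a - 1) / 2).
  by rewrite -powR12_sqrt // -powRrM [2^-1 * _]mulrC.
have exp_arg : Num.sqrt (PL / (gbar * b ^+ 2) * g) = Num.sqrt (PL / gbar * g) / b.
  by rewrite -sqrtr_div_sqr //; congr Num.sqrt; rewrite invfM; ring.
have denom : Num.sqrt (gbar / PL * g) = Num.sqrt (PL / gbar * g) / (PL / gbar).
  rewrite -sqrtr_div_sqr //; congr Num.sqrt; field.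
  by rewrite !gt_eqF.
by rewrite /gamma_pdf pdf_pow exp_arg denom !invfM !invrK; ring.
Qed.

End GammaCDFOfSqrt.

Lemma cdf_bigmax_scaled_sqr d (T : measurableType d) (R : realType)
    (P : probability T R) (K : nat) (a b c : 'I_K -> R) (Z : 'I_K -> {RV P >-> R})
    (x : R) :
  (0 < K)%N -> (forall k, 0 < a k) -> (forall k, 0 < b k) -> (forall k, 0 < c k) ->
  (forall k, gamma_distributed (Z k) (a k) (b k)) -> mutually_independent Z ->
  fine (P [set t | \big[Num.max/0]_(k < K) (c k * Z k t ^+ 2) <= x]) =
  \prod_(k < K) gamma_cdf (a k) (b k) (Num.sqrt ((c k)^-1 * x)).
Proof.
move=> K_gt0 a_gt0 b_gt0 c_gt0 Z_gamma Z_indep.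
have [x_ge0|x_lt0] := leP 0 x.
  pose I k := `[- Num.sqrt ((c k)^-1 * x), Num.sqrt ((c k)^-1 * x)]%classic.
  have -> : [set t | \big[Num.max/0]_(k < K) (c k * Z k t ^+ 2) <= x] =
      [set t | forall k, I k (Z k t)].
    apply/seteqP; split => t /=.
      by move=> /bigmax_leP[_ le_x] k; rewrite /I /= in_itv /= -mul_sqr_leE // le_x.
    move=> in_I; apply/bigmax_leP; split => // k _.
    by rewrite mul_sqr_leE //; have := in_I k; rewrite /I /= in_itv.
  rewrite Z_indep => [|k]; last exact: measurable_itv.
  under eq_bigr => k _ do
    rewrite (gamma_distributed_itv (a_gt0 k) (b_gt0 k) (Z_gamma k) (sqrtr_ge0 _)).
  by rewrite prodEFin.
rewrite (_ : [set t | _] = set0) ?measure0; last first.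
  apply/seteqP; split => t //= /bigmax_leP[max_le _].
  by have := le_lt_trans max_le x_lt0; rewrite ltxx.
rewrite (bigD1 (Ordinal K_gt0)) //= ler0_sqrtr ?gamma_cdf0 ?mul0r //.
by rewrite pmulr_rle0 ?invr_gt0 ?ltW.
Qed.

Section ProductOfGammaCDFs.
Variables (R : realType) (K : nat) (a b PL : 'I_K -> R) (gbar : R).
Hypotheses (a_gt0 : forall k, 0 < a k) (b_gt0 : forall k, 0 < b k).
Hypotheses (PL_gt0 : forall k, 0 < PL k) (gbar_gt0 : 0 < gbar).

Lemma is_msum_prod_gamma_cdf (Q : pred 'I_K) (g : R) : 0 <= g ->
  is_msum [seq k <- enum 'I_K | Q k]
    (fun ns => (\prod_(k < K | Q k) coef (a k) (b k) (PL k) gbar (ns k))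
               * powR g ((\sum_(k < K | Q k) (a k + (ns k)%:R)) / 2))
    (\prod_(k < K | Q k) gamma_cdf (a k) (b k) (Num.sqrt (PL k / gbar * g))).
Proof.
move=> g_ge0.
pose u k n := coef (a k) (b k) (PL k) gbar n * powR g ((a k + n%:R) / 2).
have := @is_msum_prod _ _ [seq k <- enum 'I_K | Q k] u
  (fun k => gamma_cdf (a k) (b k) (Num.sqrt (PL k / gbar * g))).
rewrite big_filter big_enum_cond; apply => [|k _|ns].
- by rewrite filter_uniq ?enum_uniq.
- exact: cvg_series_coef.
rewrite big_filter big_enum_cond /u [RHS]big_split mulr_suml powR_sum // => k _.
by rewrite divr_gt0 // ltr_wpDr.
Qed.

Lemma is_derive_prod_gamma_cdf (g : R) : 0 < g ->
  is_derive g 1 (fun x => \prod_(k < K) gamma_cdf (a k) (b k) (Num.sqrt (PL k / gbar * x)))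
    (\sum_(j < K)
       powR (PL j / gbar * g) ((a j - 1) / 2)
       * expR (- Num.sqrt (PL j / (gbar * b j ^+ 2) * g))
       / (2 * powR (b j) (a j) * Gamma (a j) * Num.sqrt (gbar / PL j * g))
       * \prod_(k < K | k != j) gamma_cdf (a k) (b k) (Num.sqrt (PL k / gbar * g))).
Proof.
move=> g_gt0.
have := is_derive_prod (h := fun k x => gamma_cdf (a k) (b k) (Num.sqrt (PL k / gbar * x)))
  (enum_uniq 'I_K)
  (fun k _ => is_derive_gamma_cdf_sqrt (a_gt0 k) (b_gt0 k) (PL_gt0 k) gbar_gt0 g_gt0).
under eq_fun do rewrite big_enum.
move/is_derive_eq; apply; rewrite big_enum; apply: eq_bigr => j _.
by rewrite big_enum_cond.
Qed.

End ProductOfGammaCDFs.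

Theorem theorem2 (d : measure_display) (T : measurableType d) (R : realType)
  (P : probability T R) (K : nat) (hK : (0 < K)%N)
  (a b PL : 'I_K -> R) (gbar : R)
  (ha : forall k, 0 < a k) (hb : forall k, 0 < b k) (hPL : forall k, 0 < PL k)
  (hgbar : 0 < gbar)
  (Z : 'I_K -> {RV P >-> R})
  (hZ : forall k, gamma_distributed (Z k) (a k) (b k))
  (hind : mutually_independent Z) :
  let gam := fun (k : 'I_K) (t : T) => gbar / PL k * (Z k t) ^+ 2 in
  let gstar := fun t : T => \big[Num.max/0]_(k < K) gam k t in
  let F := fun g : R => fine (P [set t | gstar t <= g]) in
  (forall g : R, 0 <= g ->
     is_msum (enum 'I_K)
       (fun ns => (\prod_(k < K) coef (a k) (b k) (PL k) gbar (ns k))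
                  * powR g ((\sum_(k < K) (a k + (ns k)%:R)) / 2))
       (F g))
  /\
  (forall g : R, 0 < g ->
     exists S : 'I_K -> R,
       (forall j : 'I_K,
          is_msum [seq k <- enum 'I_K | k != j]
            (fun ns => (\prod_(k < K | k != j) coef (a k) (b k) (PL k) gbar (ns k))
                       * powR g ((\sum_(k < K | k != j) (a k + (ns k)%:R)) / 2))
            (S j))
       /\ is_derive g 1 F
            (\sum_(j < K)
               powR (PL j / gbar * g) ((a j - 1) / 2)
               * expR (- Num.sqrt (PL j / (gbar * b j ^+ 2) * g))
               / (2 * powR (b j) (a j) * Gamma (a j) * Num.sqrt (gbar / PL j * g))
               * S j)).
Proof.
move=> gam gstar F.
have F_prod : F = fun x => \prod_(k < K) gamma_cdf (a k) (b k) (Num.sqrt (PL k / gbar * x)).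
  apply/funext => x; under eq_bigr do rewrite -[PL _ / gbar]invf_div.
  exact: (cdf_bigmax_scaled_sqr (c := fun k => gbar / PL k) _ hK ha hb
    (fun k => divr_gt0 hgbar (hPL k)) hZ hind).
split=> [g g_ge0|g g_gt0].
  by rewrite F_prod -[enum _]filter_predT; exact: is_msum_prod_gamma_cdf.
exists (fun j => \prod_(k < K | k != j) gamma_cdf (a k) (b k) (Num.sqrt (PL k / gbar * g))).
split=> [j|]; first exact/is_msum_prod_gamma_cdf/ltW.
by rewrite F_prod; exact: is_derive_prod_gamma_cdf.
Qed.
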